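(* For the Rogers--Szeg\H{o} polynomials, we have \[ \mu_{n,m} = \begin{bmatrix} n \\ m \end{bmatrix}_q q^{\frac{(n-m)^2}{2}}, \] where \( \begin{bmatrix} n \\ m \end{bmatrix}_q \) is the \( q \)-binomial coefficient given by \( \begin{bmatrix} n \\ m \end{bmatrix}_q =\frac{(1-q^n)(1-q^{n-1})\cdots(1-q^{n-m+1})}{(1-q^m)(1-q^{m-1})\cdots(1-q)} \).
   Context: Let \( (\Phi_n(z))_{n\ge0} \) be monic orthogonal polynomials on the unit circle (OPUC) with \( \deg\Phi_n=n \), \( \Phi_0=1 \), satisfying Szeg\H{o}'s recurrence \( \Phi_{n+1}(z) = z\Phi_n(z) - \overline{\alpha_n}\Phi_n^*(z) \), where \( \Phi_n^*(z)=z^n\overline{\Phi_n}(1/z) \) is the reverse polynomial and \( (\alpha_n)_{n\ge0} \) are the Verblunsky coefficients with \( |\alpha_n|<1 \). They are orthogonal with respect to the linear functional \( \mathcal{L} \) on Laurent polynomials with \( \mathcal{L}(1)=1 \) and \( \mathcal{L}(\Phi_m(z)\overline{\Phi_n}(1/z))=\kappa_n\delta_{m,n} \), \( \kappa_n>0 \). Define the inner product \( \langle f(z),g(z)\rangle=\mathcal{L}(f(z)\overline{g}(1/z)) \), the generalized moment \( \mu_{n,r,s}=\langle \Phi_s(z),z^n\Phi_r(z)\rangle/\langle\Phi_s(z),\Phi_s(z)\rangle \), and \( \mu_{n,m}=\mu_{n,0,m} \). For \( q\in(0,1) \), the Rogers--Szeg\H{o} polynomials are the OPUC with Verblunsky coefficients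 \( \alpha_n=(-1)^nq^{(n+1)/2} \), \( n\ge0 \). *)

From HB Require Import structures.
From mathcomp Require Import all_boot all_order all_algebra.
Set Implicit Arguments. Unset Strict Implicit. Unset Printing Implicit Defensive.
Import Order.TTheory GRing.Theory Num.Theory.
Local Open Scope ring_scope.

(* Reverse polynomial Phi^*_n(z) = z^n conj(Phi_n)(1/z), for deg p <= n. *)
Definition revp (C : numClosedFieldType) (n : nat) (p : {poly C}) : {poly C} :=
  \poly_(i < n.+1) (p`_(n - i))^*.

Fixpoint OPUC (C : numClosedFieldType) (alpha : nat -> C) (n : nat) : {poly C} :=
  match n with
  | 0 => 1
  | n'.+1 => 'X * OPUC alpha n' - (alpha n')^* *: revp n' (OPUC alpha n')
  end.

(* A linear functional L on Laurent polynomials is given by its moments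
   c k = L(z^k), k : int.  Then
   <f, g> = L(f(z) conj(g)(1/z)) = sum_{i,j} f_i conj(g_j) c (i - j). *)
Definition ipL (C : numClosedFieldType) (c : int -> C) (f g : {poly C}) : C :=
  \sum_(i < size f) \sum_(j < size g)
     f`_i * (g`_j)^* * c (i%:Z - j%:Z).

Definition gmoment (C : numClosedFieldType) (c : int -> C) (alpha : nat -> C)
    (n r s : nat) : C :=
  ipL c (OPUC alpha s) ('X^n * OPUC alpha r) / ipL c (OPUC alpha s) (OPUC alpha s).

Definition moment (C : numClosedFieldType) (c : int -> C) (alpha : nat -> C)
    (n m : nat) : C := gmoment c alpha n 0 m.

Definition rs_alpha (C : numClosedFieldType) (q : C) (n : nat) : C :=
  (-1) ^+ n * (sqrtC q) ^+ n.+1.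

Definition qbinom (C : numClosedFieldType) (q : C) (n m : nat) : C :=
  (\prod_(i < m) (1 - q ^+ (n - i))) / (\prod_(i < m) (1 - q ^+ (m - i))).

(* The Szego recurrence with these Verblunsky coefficients is the q-Pascal rule, so
   [Phi_m] has coefficients [[m k]_q (-sqrt q)^(m-k)]: a lower triangular matrix whose
   inverse has entries [[n j]_q sqrt q^((n-j)^2)], because the alternating sums
   [sum_t (-1)^t [N t]_q q^C(N-t,2)] vanish for [N > 0] (Gauss: they are the value at
   [1] of [prod_(j<N) (q^j - X)]).  Expanding [z^n] in the orthogonal basis [Phi_j],
   the inner product with [Phi_m] isolates [kappa_m] times the m-th coefficient. *)

From HB Require Import structures.
From mathcomp Require Import all_boot all_order all_algebra.
From mathcomp Require Import ring zify.
Import Order.TTheory GRing.Theory Num.Theory.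
Set Implicit Arguments. Unset Strict Implicit. Unset Printing Implicit Defensive.
Local Open Scope ring_scope.

Lemma sqrn_bin2 m : (m ^ 2 = m + 'C(m, 2) * 2)%N.
Proof. by elim: m => // m IH; rewrite binS bin1; nia. Qed.

Section QBinomial.

Variables (R : comNzRingType) (q : R).

Fixpoint qbin (n k : nat) : R :=
  match n, k with
  | _, 0 => 1
  | 0, _.+1 => 0
  | n.+1, k.+1 => qbin n k + q ^+ k.+1 * qbin n k.+1
  end.

Definition qfact (n : nat) : R := \prod_(i < n) (1 - q ^+ i.+1).

Lemma qbin0 n : qbin n 0 = 1. Proof. by case: n. Qed.

Lemma qbinSS n k : qbin n.+1 k.+1 = qbin n k + q ^+ k.+1 * qbin n k.+1.
Proof. by []. Qed.

Lemma qbin_small n k : (n < k)%N -> qbin n k = 0.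
Proof.
elim: n k => [|n IH] [|k] // ltnk.
by rewrite qbinSS !IH ?mulr0 ?addr0 // ltnW.
Qed.

Lemma qbinn n : qbin n n = 1.
Proof. by elim: n => // n IH; rewrite qbinSS IH qbin_small ?mulr0 ?addr0. Qed.

Lemma qfactS n : qfact n.+1 = qfact n * (1 - q ^+ n.+1).
Proof. by rewrite /qfact big_ord_recr. Qed.

Lemma qbin_qfact n k : (k <= n)%N -> qbin n k * (qfact k * qfact (n - k)) = qfact n.
Proof.
elim: n k => [|n IH] [|k] //; rewrite ?qbin0 ?subn0 /qfact ?big_ord0 ?mul1r //.
rewrite -!/(qfact _) ltnS subSS qbinSS => lekn.
case: (ltnP k n) => [ltkn | lenk]; last first.
  have -> : k = n by apply/eqP; rewrite eqn_leq lekn lenk.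
  by rewrite qbinn qbin_small // subnn /qfact big_ord0 -/(qfact _) qfactS; ring.
have := IH k lekn; have := IH k.+1 ltkn.
have [d ->] : exists d, n = (k + d.+1)%N by exists (n - k.+1)%N; lia.
rewrite addKn (_ : (k + d.+1 - k.+1 = d)%N); last by lia.
rewrite !qfactS -addSn exprD => IHk1 IHk.
rewrite (_ : qfact (k + d.+1) * _ = qfact (k + d.+1) * (1 - q ^+ k.+1)
                           + q ^+ k.+1 * (1 - q ^+ d.+1) * qfact (k + d.+1)); last by ring.
by rewrite -{1}IHk -IHk1; ring.
Qed.

Definition qprod (n : nat) : {poly R} := \prod_(j < n) ((q ^+ j)%:P - 'X).

Lemma coef_qprod n t :
  (qprod n)`_t = (-1) ^+ t * qbin n t * q ^+ 'C(n - t, 2).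
Proof.
elim: n t => [|n IH] t.
  by rewrite /qprod big_ord0 coef1; case: t => [|t]; rewrite ?expr0 ?mul1r ?mulr0 ?mul0r.
rewrite /qprod big_ord_recr [LHS]/= -/(qprod n) mulrBr coefB coefMC coefMX IH.
case: t => [|t]; rewrite [LHS]/=; first by rewrite !subn0 binS bin1 exprD !qbin0; ring.
rewrite IH qbinSS subSS.
case: (ltnP t n) => [lttn | lent].
  have [d ->] : exists d, n = (t + d.+1)%N by exists (n - t.+1)%N; lia.
  rewrite (_ : (t + d.+1 - t = d.+1)%N); last by lia.
  rewrite (_ : (t + d.+1 - t.+1 = d)%N); last by lia.
  rewrite binS bin1 -addSnnS !exprD !exprS; ring.
rewrite [qbin n t.+1]qbin_small // (_ : (n - t = 0)%N); last by lia.
rewrite (_ : (n - t.+1 = 0)%N); last by lia.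
by rewrite !exprS; ring.
Qed.

Lemma size_qprod n : (size (qprod n) <= n.+1)%N.
Proof.
elim: n => [|n IH]; first by rewrite /qprod big_ord0 size_poly1.
rewrite /qprod big_ord_recr -/(qprod n) /=.
apply: leq_trans (size_polyMleq _ _) _.
by rewrite -opprB size_polyN size_XsubC addn2.
Qed.

Lemma sum_qbin_alternating n : (0 < n)%N ->
  \sum_(t < n.+1) (-1) ^+ t * qbin n t * q ^+ 'C(n - t, 2) = 0.
Proof.
case: n => // n _.
rewrite -[RHS](_ : (qprod n.+1).[1] = 0); last first.
  by rewrite /qprod horner_prod big_ord_recl !hornerE expr0 subrr mul0r.
rewrite (horner_coef_wide _ (size_qprod n.+1)).
by apply: eq_bigr => t _; rewrite coef_qprod expr1n mulr1.
Qed.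

End QBinomial.

Section QBinomialField.

Variables (F : fieldType) (q : F).
(* Equivalently, [q] is not a root of unity. *)
Hypothesis nz_qfact : forall n, qfact q n != 0.

Lemma qbinE n k : (k <= n)%N -> qbin q n k = qfact q n / (qfact q k * qfact q (n - k)).
Proof. by move=> lekn; rewrite -(qbin_qfact q lekn) mulfK // mulf_neq0. Qed.

Lemma qbin_sym n k : (k <= n)%N -> qbin q n (n - k) = qbin q n k.
Proof. by move=> lekn; rewrite !qbinE ?leq_subr // subKn // [qfact q k * _]mulrC. Qed.

Lemma qbin_mul_qbin n k t : (k + t <= n)%N ->
  qbin q n (k + t) * qbin q (k + t) k = qbin q n k * qbin q (n - k) t.
Proof.
move=> le_n; have [d ->] : exists d, n = (k + t + d)%N by exists (n - (k + t))%N; lia.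
rewrite !qbinE; [|lia..].
rewrite -!addnA !subnDA !addKn.
by field; rewrite !nz_qfact.
Qed.

Lemma qbin_inversion (s : F) n k : s ^+ 2 = q ->
  \sum_(j < n.+1) qbin q n j * s ^+ ((n - j) ^ 2) * (qbin q j k * (- s) ^+ (j - k))
    = (n == k)%:R.
Proof.
move=> sq_s; case: (ltnP n k) => [ltnk | lekn].
  rewrite big1 ?ltn_eqF // => j _.
  by rewrite [qbin q j k]qbin_small ?mul0r ?mulr0 // (leq_trans _ ltnk) // -ltnS.
pose G j := qbin q n j * s ^+ ((n - j) ^ 2) * (qbin q j k * (- s) ^+ (j - k)).
rewrite -(big_mkord xpredT G) (@big_cat_nat _ _ _ k) ?leqW //=.
rewrite big_nat_cond big1 ?add0r => [|j /andP[/andP[_ ltjk] _]]; last first.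
  by rewrite /G [qbin q j k]qbin_small ?mul0r ?mulr0.
rewrite -{1}[k]add0n big_addn subSn // big_mkord /G.
have termE t : (t <= n - k)%N ->
    qbin q n (t + k) * s ^+ ((n - (t + k)) ^ 2) * (qbin q (t + k) k * (- s) ^+ (t + k - k))
    = qbin q n k * s ^+ (n - k) * ((-1) ^+ t * qbin q (n - k) t * q ^+ 'C(n - k - t, 2)).
  move=> letn.
  have exp_e : ((n - k - t) ^ 2 + t = n - k + 2 * 'C(n - k - t, 2))%N.
    by rewrite sqrn_bin2; lia.
  rewrite addnK (addnC t k) subnDA.
  transitivity (qbin q n (k + t) * qbin q (k + t) k
                * ((-1) ^+ t * s ^+ ((n - k - t) ^ 2 + t))).
    by rewrite [(- s) ^+ t]exprNn exprD; ring.
  rewrite qbin_mul_qbin; last by lia.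
  by rewrite exp_e exprD exprM sq_s; ring.
rewrite (eq_bigr _ (fun (t : 'I_(n - k).+1) _ => termE t (ltn_ord t))) -big_distrr /=.
case: (ltnP k n) => [ltkn | lenk].
  by rewrite sum_qbin_alternating ?subn_gt0 // mulr0 gtn_eqF.
have -> : n = k by apply/eqP; rewrite eqn_leq lenk lekn.
by rewrite subnn big_ord1 qbinn eqxx !expr0 !mul1r.
Qed.

End QBinomialField.

Lemma qfact_neq0 (R : numDomainType) (q : R) n : 0 < q -> q < 1 -> qfact q n != 0.
Proof.
move=> q_gt0 q_lt1; apply/prodf_neq0 => i _.
by rewrite subr_eq0 eq_sym lt_eqF // exprn_ilt1 ?ltW.
Qed.

Lemma qbin_real (R : numDomainType) (q : R) n k : q \is Num.real -> qbin q n k \is Num.real.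
Proof.
move=> q_real; elim: n k => [|n IH] [|k] //=; rewrite ?rpred0 ?rpred1 //.
by rewrite rpredD ?rpredM ?rpredX ?IH.
Qed.

Lemma qbinom_small (C : numClosedFieldType) (q : C) n m : (n < m)%N -> qbinom q n m = 0.
Proof. by move=> ltnm; rewrite /qbinom (bigD1 (Ordinal ltnm)) //= subnn subrr !mul0r. Qed.

Lemma qbinomE (C : numClosedFieldType) (q : C) n m :
  (forall i, qfact q i != 0) -> (m <= n)%N -> qbinom q n m = qbin q n m.
Proof.
move=> nz_qfact lemn; have [d ->] : exists d, n = (d + m)%N by exists (n - m)%N; lia.
have num : \prod_(i < m) (1 - q ^+ (d + m - i)) * qfact q d = qfact q (d + m).
  elim: m {lemn} => [|m IH]; first by rewrite big_ord0 mul1r addn0.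
  rewrite big_ord_recl subn0 addnS qfactS -IH.
  under eq_bigr do rewrite lift0 subSS.
  by ring.
have den : \prod_(i < m) (1 - q ^+ (m - i)) = qfact q m.
  rewrite -(big_mkord xpredT (fun i => 1 - q ^+ (m - i))) big_rev_mkord subn0 /qfact.
  by apply: eq_bigr => i _; rewrite subKn.
rewrite /qbinom den qbinE ?leq_addl // addnK -num.
by field; rewrite !nz_qfact.
Qed.

Section RogersSzego.

Variables (C : numClosedFieldType) (q : C).
Hypotheses (q_gt0 : 0 < q) (q_lt1 : q < 1).

Let nz_qfact i : qfact q i != 0. Proof. exact: qfact_neq0. Qed.

Lemma rs_alphaE m : rs_alpha q m = - (- sqrtC q) ^+ m.+1.
Proof. by rewrite /rs_alpha [(- sqrtC q) ^+ _]exprNn [(-1) ^+ m.+1]exprS; ring. Qed.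

Lemma coef_OPUC_rs m k :
  (OPUC (rs_alpha q) m)`_k = qbin q m k * (- sqrtC q) ^+ (m - k).
Proof.
set t := - sqrtC q.
have t_real : t \is Num.real by rewrite rpredN sqrtC_real ?ltW.
have q_real : q \is Num.real by rewrite gtr0_real.
have q_sqr : q = t ^+ 2 by rewrite sqrrN sqrtCK.
have conj_alpha j : (rs_alpha q j)^* = rs_alpha q j.
  by rewrite conj_Creal // rs_alphaE rpredN rpredX.
elim: m k => [|m IH] k.
  by rewrite coef1; case: k => [|k]; rewrite ?mul1r ?mul0r.
rewrite [OPUC _ m.+1]/= coefB coefXM coefZ /revp coef_poly conj_alpha rs_alphaE -/t.
case: k => [|k]; rewrite [LHS]/=.
  by rewrite subn0 IH subnn qbinn expr0 mulr1 conjC1 qbin0; ring.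
rewrite qbinSS subSS ltnS !IH.
case: (ltnP k m) => [ltkm | lekm].
  rewrite conj_Creal ?rpredM ?qbin_real ?rpredX //.
  rewrite subKn // qbin_sym // [in q ^+ k.+1]q_sqr -exprM.
  have -> : (m - k = (m - k.+1).+1)%N by lia.
  have -> : (m.+1 = k.+1 + (m - k.+1).+1)%N by lia.
  by rewrite mul2n -addnn !exprD; ring.
have -> : (m - k = 0)%N by lia.
by rewrite [qbin q m k.+1]qbin_small ?ltnS //; ring.
Qed.

Lemma OPUC_rs_inversion n :
  'X^n = \sum_(j < n.+1) (qbin q n j * sqrtC q ^+ ((n - j) ^ 2)) *: OPUC (rs_alpha q) j.
Proof.
apply/polyP => k; rewrite coefXn coef_sum.
under eq_bigr do rewrite coefZ coef_OPUC_rs.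
by rewrite (qbin_inversion nz_qfact) ?sqrtCK // eq_sym.
Qed.

End RogersSzego.

Section InnerProduct.

Variables (C : numClosedFieldType) (c : int -> C).

Lemma ipL_widenr (f g : {poly C}) N : (size g <= N)%N ->
  ipL c f g = \sum_(i < size f) \sum_(j < N) f`_i * (g`_j)^* * c (i%:Z - j%:Z).
Proof.
move=> le_gN; apply: eq_bigr => i _.
rewrite (big_ord_widen N (fun j => f`_i * (g`_j)^* * c (i%:Z - j%:Z)) le_gN) big_mkcond.
apply: eq_bigr => j _; case: ltnP => // /(nth_default 0) ->.
by rewrite conjC0 mulr0 mul0r.
Qed.

Lemma ipLDr (f g h : {poly C}) : ipL c f (g + h) = ipL c f g + ipL c f h.
Proof.
pose N := maxn (size g) (size h).
rewrite !(@ipL_widenr _ _ N) ?leq_maxl ?leq_maxr ?(leq_trans (size_polyD _ _)) //.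
rewrite -big_split; apply: eq_bigr => i _; rewrite -big_split; apply: eq_bigr => j _.
by rewrite coefD rmorphD /=; ring.
Qed.

Lemma ipLZr (f : {poly C}) a g : ipL c f (a *: g) = a^* * ipL c f g.
Proof.
rewrite (@ipL_widenr _ _ (size g)) ?size_scale_leq // big_distrr; apply: eq_bigr => i _.
by rewrite big_distrr; apply: eq_bigr => j _; rewrite coefZ rmorphM /=; ring.
Qed.

Lemma ipL_sumr (f : {poly C}) (I : Type) (r : seq I) (a : I -> C) (g : I -> {poly C}) :
  ipL c f (\sum_(j <- r) a j *: g j) = \sum_(j <- r) (a j)^* * ipL c f (g j).
Proof.
elim: r => [|j r IH]; last by rewrite !big_cons ipLDr IH ipLZr.
by rewrite !big_nil /ipL size_poly0 big1 // => i _; rewrite big_ord0.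
Qed.

End InnerProduct.

Theorem proposition4p13 (C : numClosedFieldType) (q : C)
    (hq0 : 0 < q) (hq1 : q < 1) (c : int -> C)
    (hL1 : c 0 = 1)
    (hort : exists kappa : nat -> C,
        (forall n, 0 < kappa n) /\
        (forall m n, ipL c (OPUC (rs_alpha q) m) (OPUC (rs_alpha q) n)
                     = if m == n then kappa n else 0))
    (n m : nat) :
  moment c (rs_alpha q) n m
    = qbinom q n m * (sqrtC q) ^+ (`|(n%:Z - m%:Z)%R|%N ^ 2).
Proof.
have [kappa [kappa_gt0 orth]] := hort.
pose a j := qbin q n j * sqrtC q ^+ ((n - j) ^ 2).
have a_real j : a j \is Num.real.
  by rewrite rpredM ?rpredX ?qbin_real ?sqrtC_real ?gtr0_real ?ltW.
rewrite /moment /gmoment mulr1 (OPUC_rs_inversion hq0 hq1 n) ipL_sumr.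
under eq_bigr => j _ do rewrite orth eq_sym (fun_if (fun x => _ * x)) mulr0.
rewrite -big_mkcond (big_ord1_eq _ (fun j => (a j)^* * kappa j)) ltnS orth eqxx.
case: (leqP m n) => [lemn | ltnm]; last by rewrite mul0r qbinom_small ?mul0r.
rewrite mulfK ?gt_eqF // conj_Creal // qbinomE ?distnEl // => i.
exact: qfact_neq0.
Qed.
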